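(* Let $X$ be a countable set and let $w$ be an essentially locally finite weight on $X$ which is geodesically complete. Then for every $x,y\in X$ there is a $w$-geodesic from $x$ to $y$.
   Context: A weight on $X$ is a symmetric function $w:X\times X\to[0,\infty]$ with $w(x,y)=0$ iff $x=y$; it is essentially locally finite if $\#\{y\in X\mid w(x,y)<R\}<\infty$ for all $x\in X$, $R>0$. A path from $x$ to $y$ is a finite sequence $(x_0,\dots,x_n)$ of pairwise distinct elements of $X$ with $x_0=x$, $x_n=y$; an infinite path is a sequence $(x_0,x_1,\dots)$ of pairwise distinct elements. The $w$-length is $l_w=\sum_i w(x_{i-1},x_i)$ (finite or infinite sum), and $\delta_w(x,y)$ is the infimum of $l_w$ over all paths from $x$ to $y$. A $w$-geodesic from $x$ to $y$ is a path with $l_w(\gamma)=\delta_w(x,y)$; an infinite path $(x_0,x_1,\dots)$ is an infinite $w$-geodesic if $(x_0,\dots,x_n)$ is a $w$-geodesic for every $n$. $w$ is geodesically complete if every infinite $w$-geodesic has infinite $w$-length. *)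

From HB Require Import structures.
From mathcomp Require Import all_boot all_order all_algebra.
From mathcomp Require Import all_classical all_reals all_analysis.
Set Implicit Arguments. Unset Strict Implicit. Unset Printing Implicit Defensive.
Import Order.TTheory GRing.Theory Num.Theory.
Local Open Scope classical_set_scope.
Local Open Scope ereal_scope.

Section WeightDefs.
Variables (R : realType) (X : countType) (w : X -> X -> \bar R).

Definition is_weight : Prop :=
  [/\ (forall x y, w x y = w y x), (forall x y, 0 <= w x y)
    & (forall x y, w x y = 0 <-> x = y)].

Definition ess_loc_finite : Prop :=
  forall (x : X) (r : R), (0 < r)%R -> finite_set [set y | w x y < r%:E].

Definition is_path (x y : X) (p : seq X) : Prop :=
  [/\ (0 < size p)%N, head x p = x, last x p = y & uniq p].

Definition lw (p : seq X) : \bar R :=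
  \sum_(e <- zip p (behead p)) w e.1 e.2.

Definition delta (x y : X) : \bar R :=
  ereal_inf [set lw p | p in [set p | is_path x y p]].

Definition is_geodesic (x y : X) (p : seq X) : Prop :=
  is_path x y p /\ lw p = delta x y.

Definition is_inf_path (p : nat -> X) : Prop := injective p.

Definition lw_inf (p : nat -> X) : \bar R :=
  \sum_(0 <= k <oo) w (p k) (p k.+1).

Definition is_inf_geodesic (p : nat -> X) : Prop :=
  is_inf_path p /\ forall n, is_geodesic (p 0%N) (p n) (mkseq p n.+1).

Definition geod_complete : Prop :=
  forall p : nat -> X, is_inf_geodesic p -> lw_inf p = +oo.

End WeightDefs.

From mathcomp Require Import all_boot all_order all_algebra.
From mathcomp Require Import all_classical all_reals all_analysis.
Import Order.TTheory GRing.Theory Num.Theory.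
Set Implicit Arguments. Unset Strict Implicit. Unset Printing Implicit Defensive.
Local Open Scope classical_set_scope.
Local Open Scope ereal_scope.

(* Suppose there is no geodesic from x to y; then d := delta(x,y) is finite.
   Call q near-optimal if x :: q extends to paths from x to y of length
   arbitrarily close to d.  The empty q is near-optimal, and a near-optimal q
   has a near-optimal one-vertex extension: the candidate vertices lie in the
   finite ball {v | w(last q, v) < d + 1}, so a single one of them serves every
   tolerance.  A near-optimal x :: q never ends at y (it would be a geodesic),
   and it is itself a geodesic, since a shorter path to its endpoint, spliced
   with the tail of a near-optimal path, would beat d.  Iterating produces an
   infinite geodesic of length at most d, against geodesic completeness. *)

Lemma finite_witness_all_pos (R : realDomainType) (T : eqType) (s : seq T)
    (P : T -> R -> Prop) :
  (forall v e e', (0 < e)%R -> (e <= e')%R -> P v e -> P v e') ->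
  (forall e, (0 < e)%R -> exists2 v, v \in s & P v e) ->
  exists v, forall e, (0 < e)%R -> P v e.
Proof.
move=> P_mono; elim: s => [|u s IHs] small_witness.
  by have [v] := small_witness 1%R ltr01.
have [Pu|] := pselect (forall e, (0 < e)%R -> P u e); first by exists u.
move=> /existsNP[eu /not_implyP[eu_gt0 notPu]].
apply: IHs => e e_gt0.
have me_gt0 : (0 < Num.min e eu)%R by rewrite lt_min e_gt0.
have [v] := small_witness _ me_gt0; rewrite inE => /predU1P[->|v_s] Pv.
  by case: notPu; apply: P_mono Pv; rewrite // ge_min lexx orbT.
by exists v => //; apply: P_mono Pv; rewrite // ge_min lexx.
Qed.

Section WeightedLength.
Variables (R : realType) (X : countType) (w : X -> X -> \bar R).
Hypothesis w_ge0 : forall u v, 0 <= w u v.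

Lemma lw_nil : lw w [::] = 0. Proof. by rewrite /lw big_nil. Qed.

Lemma lw_seq1 u : lw w [:: u] = 0. Proof. by rewrite /lw big_nil. Qed.

Lemma lw_cons2 u v s : lw w [:: u, v & s] = w u v + lw w (v :: s).
Proof. by rewrite /lw big_cons. Qed.

Lemma lw_ge0 p : 0 <= lw w p.
Proof. by apply: sume_ge0 => e _; apply: w_ge0. Qed.

Lemma lw_le_cons u p : lw w p <= lw w (u :: p).
Proof. by case: p => [|v p]; rewrite ?lw_nil ?lw_seq1 // lw_cons2 leeDr. Qed.

Lemma lw_suffix_le p s : lw w s <= lw w (p ++ s).
Proof. by elim: p => //= u p IHp; apply: le_trans IHp (lw_le_cons _ _). Qed.

Lemma lw_cat_last x q s : lw w (x :: q ++ s) = lw w (x :: q) + lw w (last x q :: s).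
Proof.
elim: q x => [|v q IHq] x /=; first by rewrite lw_seq1 add0e.
by rewrite !lw_cons2 IHq addeA.
Qed.

Lemma lw_prefix_le x q s : lw w (x :: q) <= lw w (x :: q ++ s).
Proof. by rewrite lw_cat_last leeDl ?lw_ge0. Qed.

Lemma lw_rcons p u v : lw w (rcons (rcons p u) v) = lw w (rcons p u) + w u v.
Proof.
case: p => [|x q] /=; first by rewrite lw_cons2 lw_seq1 adde0 lw_seq1 add0e.
by rewrite -[rcons (rcons q u) v]cats1 lw_cat_last last_rcons lw_cons2 lw_seq1 adde0.
Qed.

Lemma lw_mkseq (f : nat -> X) n :
  \sum_(0 <= k < n) w (f k) (f k.+1) = lw w (mkseq f n.+1).
Proof.
elim: n => [|n IHn]; first by rewrite big_geq // lw_seq1.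
by rewrite big_nat_recr //= IHn !mkseqS lw_rcons.
Qed.

Lemma delta_le_path x y p : is_path x y p -> delta w x y <= lw w p.
Proof. by move=> p_path; apply: ereal_inf_lbound; exists p. Qed.

Lemma delta_ge0 x y : 0 <= delta w x y.
Proof. by apply: le_ereal_inf_tmp => _ [p _ <-]; apply: lw_ge0. Qed.

Lemma delta_le_edge x v z : delta w x z <= w x v + delta w v z.
Proof.
case wxv: (w x v) => [a||]; last by have := w_ge0 x v; rewrite wxv.
  rewrite -leeBlDl //; apply: le_ereal_inf_tmp => _ [r [size_r head_r last_r uniq_r] <-].
  rewrite leeBlDl // -wxv.
  have [x_r|x_notin_r] := boolP (x \in r).
    move: last_r uniq_r; case/splitPr: x_r => a' c last_r uniq_r.
    apply: le_trans (le_trans (lw_suffix_le a' (x :: c)) (leeDr _ (w_ge0 x v))).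
    apply: delta_le_path; split=> //; first by move: last_r; rewrite last_cat.
    by move: uniq_r; rewrite cat_uniq => /and3P[].
  case: r size_r head_r last_r uniq_r x_notin_r => // u r _ /= -> last_r uniq_r x_notin_r.
  by rewrite -lw_cons2; apply: delta_le_path; split=> //=; rewrite x_notin_r.
by rewrite addye ?leey //; apply: contraTneq (delta_ge0 v z) => ->.
Qed.

Lemma delta_le_walk x p : delta w x (last x p) <= lw w (x :: p).
Proof.
elim: p x => [|v p IHp] x /=; first by apply: delta_le_path; split.
by rewrite lw_cons2; apply: le_trans (delta_le_edge x v _) (leeD2l _ (IHp v)).
Qed.

End WeightedLength.

Section NearOptimalPrefixes.
Variables (R : realType) (X : countType) (w : X -> X -> \bar R).
Hypotheses (w_ge0 : forall u v, 0 <= w u v) (w_elf : ess_loc_finite w).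
Variables (x y : X) (d : R).
Hypothesis delta_xy : delta w x y = d%:E.
Hypothesis no_geodesic : forall p, ~ is_geodesic w x y p.

Definition near_optimal_prefix (q : seq X) : Prop :=
  forall e : R, (0 < e)%R ->
  exists s, is_path x y (x :: q ++ s) /\ lw w (x :: q ++ s) < (d + e)%:E.

Lemma near_optimal_nil : near_optimal_prefix [::].
Proof.
move=> e e_gt0; have : delta w x y < (d + e)%:E by rewrite delta_xy lte_fin ltrDl.
case/ereal_inf_lt => _ [[|u p] p_path <-] lt_p; first by case: p_path.
have u_x : u = x by case: p_path.
by subst u; exists p.
Qed.

Lemma near_optimal_path q : near_optimal_prefix q -> is_path x (last x q) (x :: q).
Proof.
move=> /(_ 1%R ltr01) [s [[_ _ _ uniq_qs] _]]; split=> //.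
by move: uniq_qs; rewrite -cat_cons cat_uniq => /and3P[].
Qed.

Lemma near_optimal_lw_le q : near_optimal_prefix q -> lw w (x :: q) <= d%:E.
Proof.
move=> near_q; apply/lee_addgt0Pr => e /near_q [s [_ lt_qs]].
by rewrite -EFinD; apply: le_trans (lw_prefix_le w_ge0 x q s) (ltW lt_qs).
Qed.

Lemma near_optimal_last_neq q : near_optimal_prefix q -> last x q <> y.
Proof.
move=> near_q last_q; apply: (no_geodesic (p := x :: q)).
have q_path : is_path x y (x :: q) by rewrite -last_q; apply: near_optimal_path.
split=> //; apply/le_anti/andP; split; last exact: delta_le_path.
by rewrite delta_xy; apply: near_optimal_lw_le.
Qed.

Lemma near_optimal_geodesic q :
  near_optimal_prefix q -> is_geodesic w x (last x q) (x :: q).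
Proof.
move=> near_q; have q_path := near_optimal_path near_q.
split=> //; apply/le_anti/andP; split; last exact: delta_le_path.
apply: le_ereal_inf_tmp => _ [[|u r] [//= _ u_x r_last _] <-]; subst u.
apply/lee_addgt0Pr => e /near_q [s [[_ _ qs_last _] lt_qs]].
set t := lw w (last x q :: s).
have t_fin : t \is a fin_num.
  rewrite ge0_fin_numE ?lw_ge0 //; apply: le_lt_trans (lt_trans lt_qs (ltry _)).
  by rewrite lw_cat_last leeDr ?lw_ge0.
have d_le : d%:E <= lw w (x :: r) + t.
  rewrite -delta_xy /t -r_last -lw_cat_last.
  have -> : y = last x (r ++ s) by rewrite -qs_last /= !last_cat r_last.
  exact: delta_le_walk.
rewrite -(leeD2rE _ _ t_fin) -lw_cat_last; apply: ltW (lt_le_trans lt_qs _).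
by rewrite EFinD addeAC leeD2r.
Qed.

Lemma near_optimal_rcons q :
  near_optimal_prefix q -> exists v, near_optimal_prefix (rcons q v).
Proof.
move=> near_q.
have d_ge0 : (0 <= d)%R by rewrite -lee_fin -delta_xy delta_ge0.
have /finite_seqP[ball ball_def] := w_elf (last x q) (ltr_wpDl d_ge0 ltr01).
apply: (@finite_witness_all_pos _ _ ball) => [v e e' _ le_ee' [s [s_path lt_s]]|e e_gt0].
  by exists s; split=> //; apply: lt_le_trans lt_s _; rewrite lee_fin lerD2l.
have me_gt0 : (0 < Num.min e 1)%R by rewrite lt_min e_gt0 ltr01.
have [[|v s] [qs_path lt_qs]] := near_q _ me_gt0.
  by case: qs_path => _ _; rewrite cats0 => /(near_optimal_last_neq near_q).
exists v.
  have : [set u | w (last x q) u < (d + 1)%:E] v.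
    apply: le_lt_trans (lt_le_trans lt_qs _); last by rewrite lee_fin lerD2l ge_min lexx orbT.
    by rewrite lw_cat_last lw_cons2 addeCA leeDl // adde_ge0 ?lw_ge0.
  by rewrite ball_def.
exists s; rewrite cat_rcons; split=> //.
by apply: lt_le_trans lt_qs _; rewrite lee_fin lerD2l ge_min lexx.
Qed.

Lemma near_optimal_ray : exists g : nat -> X, forall n, near_optimal_prefix (mkseq g n).
Proof.
have [next next_spec] : {next : seq X -> X & forall q,
    near_optimal_prefix q -> near_optimal_prefix (rcons q (next q))}.
  apply: (@choice _ _ (fun q v => near_optimal_prefix q -> near_optimal_prefix (rcons q v))).
  move=> q; have [/near_optimal_rcons[v near_qv]|not_near_q] := pselect (near_optimal_prefix q).
    by exists v.
  by exists x.
pose prefix n := iter n (fun q => rcons q (next q)) [::].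
exists (fun k => next (prefix k)).
suff prefixE n : prefix n = mkseq (fun k => next (prefix k)) n.
  move=> n; rewrite -prefixE; elim: n => [|n IHn] /=.
    exact: near_optimal_nil.
  exact: next_spec.
by elim: n => //= n IHn; rewrite mkseqS -IHn.
Qed.

Lemma no_geodesic_absurd : geod_complete w -> False.
Proof.
move=> complete; have [g near_g] := near_optimal_ray.
pose f n := if n is k.+1 then g k else x.
have mkseq_f n : mkseq f n.+1 = x :: mkseq g n.
  by elim: n => // n IHn; rewrite mkseqS IHn mkseqS.
have last_g n : last x (mkseq g n) = f n by case: n => // n; rewrite mkseqS last_rcons.
have f_geodesic n : is_geodesic w x (f n) (mkseq f n.+1).
  by rewrite mkseq_f -last_g; apply: near_optimal_geodesic.
have f_inj : injective f.
  move=> i j; have [[_ _ _ /mkseq_uniqP f_inj] _] := f_geodesic (maxn i j).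
  by apply: f_inj; rewrite inE ltnS ?leq_maxl ?leq_maxr.
have lw_inf_f : lw_inf w f = +oo by apply: complete; split.
have : lw_inf w f <= d%:E.
  apply: lime_le; first exact: is_cvg_nneseries.
  by apply: nearW => n; rewrite lw_mkseq mkseq_f; apply: near_optimal_lw_le.
by rewrite lw_inf_f.
Qed.

End NearOptimalPrefixes.

Theorem lemma2p5 (R : realType) (X : countType) (w : X -> X -> \bar R) :
  is_weight w -> ess_loc_finite w -> geod_complete w ->
  forall x y : X, exists p : seq X, is_geodesic w x y p.
Proof.
move=> [_ w_ge0 _] w_elf complete x y; apply: contrapT => /forallNP no_geodesic.
have := delta_ge0 w_ge0 x y; case delta_xy: (delta w x y) => [d||] // _.
  exact: (no_geodesic_absurd w_ge0 w_elf delta_xy no_geodesic complete).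
pose p := if x == y then [:: x] else [:: x; y].
have p_path : is_path x y p.
  by rewrite /p; case: eqP => [<-|x_neq_y]; split=> //=; rewrite inE andbT; apply/eqP.
apply: (no_geodesic p); split=> //; apply/le_anti/andP.
by rewrite delta_xy leey -delta_xy delta_le_path.
Qed.
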